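(* The full subcategory $\mathbf{Eph}_n$ of ephemeral modules is a Serre subcategory of the category $\mathbf{Pers}_n$ of $n$-parameter persistence modules: for every short exact sequence $0\to V'\to V\to V''\to0$ in $\mathbf{Pers}_n$, the module $V$ is ephemeral if and only if both $V'$ and $V''$ are ephemeral.
   Context: Fix a field $\mathbb{k}$. $\mathbf{Pers}_n$ is the (Abelian) category of functors $V:\mathbf{R}^n\to\mathbf{Vect}_{\mathbb{k}}$, where $\mathbf{R}^n$ carries the componentwise order; $V_{s,t}$ denotes structure maps. A module $V$ is ephemeral if $V_{s-\varepsilon,s}=0$ for all $s\in\mathbb{R}^n$ and $\varepsilon>0$, where $s-\varepsilon$ subtracts $\varepsilon$ from each coordinate. *)

From HB Require Import structures.
From mathcomp Require Import all_boot all_order all_algebra.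
From mathcomp Require Import reals.
Set Implicit Arguments. Unset Strict Implicit. Unset Printing Implicit Defensive.
Import Order.TTheory GRing.Theory Num.Theory.
Local Open Scope ring_scope.

Definition lev (R : realType) (n : nat) (s t : 'I_n -> R) : bool :=
  [forall i, s i <= t i].

Definition shiftv (R : realType) (n : nat) (s : 'I_n -> R) (eps : R) : 'I_n -> R :=
  fun i => s i - eps.

(* An n-parameter persistence module over the field k: a functor
   (R^n, <=) -> Vect_k.  Vector spaces are lmodType k (arbitrary dimension). *)
Record pers (R : realType) (n : nat) (k : fieldType) := Pers {
  pobj : ('I_n -> R) -> lmodType k;
  pmap : forall s t, lev s t -> {linear pobj s -> pobj t};
  pmap_id : forall s (h : lev s s) (x : pobj s), pmap h x = x;
  pmap_comp : forall s t u (hst : lev s t) (htu : lev t u) (hsu : lev s u)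
      (x : pobj s), pmap hsu x = pmap htu (pmap hst x)
}.

Record pmorph (R : realType) (n : nat) (k : fieldType) (V W : pers R n k) := PMorph {
  pcomp : forall s, {linear pobj V s -> pobj W s};
  pnat : forall s t (h : lev s t) (x : pobj V s),
      pcomp t (pmap V h x) = pmap W h (pcomp s x)
}.

Definition ephemeral (R : realType) (n : nat) (k : fieldType) (V : pers R n k) : Prop :=
  forall (s : 'I_n -> R) (eps : R) (h : lev (shiftv s eps) s),
    0 < eps -> forall x : pobj V (shiftv s eps), pmap V h x = 0.

(* Short exact sequence 0 -> V' -f-> V -g-> V'' -> 0 in Pers_n
   (exactness in the functor category is pointwise). *)
Definition short_exact (R : realType) (n : nat) (k : fieldType)
    (V' V V'' : pers R n k) (f : pmorph V' V) (g : pmorph V V'') : Prop :=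
  forall s : 'I_n -> R,
    [/\ injective (pcomp f s),
        (forall y : pobj V s, pcomp g s y = 0 <-> exists x, pcomp f s x = y)
      & (forall z : pobj V'' s, exists y, pcomp g s y = z)].

From Pilot Require Import Defs.
From HB Require Import structures.
From mathcomp Require Import all_boot all_order all_algebra.
From mathcomp Require Import reals.
(* Re-import so that [pmap] denotes the structure maps, not [seq.pmap]. *)
Import Defs.
Set Implicit Arguments. Unset Strict Implicit.
Import Order.TTheory GRing.Theory Num.Theory.
Local Open Scope ring_scope.

(* Submodules and quotients inherit the vanishing of V_{s-eps,s} by
   naturality.  For an extension, factor V_{s-eps,s} through s - eps/2: the
   first half lands in the kernel of g, i.e. in the image of V', and the
   second half kills that image because V' is ephemeral. *)

Section Ephemeral.
Variables (R : realType) (n : nat) (k : fieldType).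
Implicit Types (V W : pers R n k) (s : 'I_n -> R).

Lemma lev_shiftv s eps : 0 <= eps -> lev (shiftv s eps) s.
Proof. by move=> eps_ge0; apply/forallP => i; rewrite /shiftv gerBl. Qed.

Lemma lev_shiftv2 s e1 e2 : e1 <= e2 -> lev (shiftv s e2) (shiftv s e1).
Proof. by move=> le_e; apply/forallP => i; rewrite /shiftv lerB. Qed.

Lemma ephemeral_pmap_eq0 V a b (h : lev a b) eps :
  ephemeral V -> 0 < eps -> lev a (shiftv b eps) -> forall x, pmap V h x = 0.
Proof.
move=> eph eps_gt0 hab x.
have hb : lev (shiftv b eps) b by exact/lev_shiftv/ltW.
by rewrite (pmap_comp hab hb h) eph.
Qed.

Lemma ephemeral_sub V W (f : pmorph V W) :
  (forall s, injective (pcomp f s)) -> ephemeral W -> ephemeral V.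
Proof.
move=> f_inj eph s eps h eps_gt0 x; apply: (f_inj s).
by rewrite pnat eph // linear0.
Qed.

Lemma ephemeral_quotient V W (g : pmorph V W) :
  (forall s z, exists y, pcomp g s y = z) -> ephemeral V -> ephemeral W.
Proof.
move=> g_surj eph s eps h eps_gt0 z; have [y <-] := g_surj _ z.
by rewrite -pnat eph // linear0.
Qed.

Lemma ephemeral_extension V' V V'' (f : pmorph V' V) (g : pmorph V V'') :
    (forall s y, pcomp g s y = 0 -> exists x, pcomp f s x = y) ->
  ephemeral V' -> ephemeral V'' -> ephemeral V.
Proof.
move=> ker_g_sub eph' eph'' s eps h eps_gt0 y.
have eps2_gt0 : 0 < eps / 2 by rewrite divr_gt0.
pose c := shiftv s (eps / 2).
have h_first : lev (shiftv s eps) c.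
  by apply: lev_shiftv2; rewrite ler_pdivrMr // ler_peMr ?ler1n // ltW.
have h_second : lev c s by exact/lev_shiftv/ltW.
have g_vanish : pcomp g c (pmap V h_first y) = 0.
  rewrite pnat (ephemeral_pmap_eq0 h_first eph'' eps2_gt0) //.
  by apply/forallP => i; rewrite /shiftv -addrA -opprD -splitr.
have [x fx] := ker_g_sub c _ g_vanish.
by rewrite (pmap_comp h_first h_second h) -fx -pnat eph' // linear0.
Qed.

End Ephemeral.

Theorem lemma2p5 (R : realType) (n : nat) (k : fieldType)
    (V' V V'' : pers R n k) (f : pmorph V' V) (g : pmorph V V'') :
  short_exact f g ->
  (ephemeral V <-> ephemeral V' /\ ephemeral V'').
Proof.
move=> exact_fg; split.
- move=> eph; split.
  + by apply: (ephemeral_sub (f := f)) eph => s; case: (exact_fg s).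
  + by apply: (ephemeral_quotient (g := g)) eph => s; case: (exact_fg s).
- case=> eph' eph''; apply: (ephemeral_extension (f := f) (g := g)) eph' eph''.
  by move=> s y; case: (exact_fg s) => _ exact_s _ /exact_s.
Qed.
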